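(* For any connected locally finite cell complex $X$ with universal cover $\tilde X$, one has $\widetilde{\mathsf{TC}}(X)\ge\mathsf{TC}(\tilde X)$.
   Context: Normalized convention: $\mathsf{TC}$ of a contractible space is $0$; $\mathsf{TC}(Y)$ is the least $n$ such that $Y\times Y$ has an open cover by $n+1$ sets each admitting a continuous section of $Y^I\to Y\times Y$, $\alpha\mapsto(\alpha(0),\alpha(1))$. Let $P\colon\tilde X\to X$ be the universal cover with $\pi=\pi_1(X)$ acting by deck transformations, and $\tilde X\times_\pi\tilde X$ the quotient of $\tilde X\times\tilde X$ by the diagonal $\pi$-action. Let $p\colon X^I\to\tilde X\times_\pi\tilde X$, $p(\gamma)=[\tilde\gamma(0),\tilde\gamma(1)]$ for any lift $\tilde\gamma$ of $\gamma$, and $q\colon\tilde X\times_\pi\tilde X\to X\times X$, $q([x,y])=(Px,Py)$. $\widetilde{\mathsf{TC}}(X)$ is the least $k\ge0$ such that $X\times X$ has an open cover $U_0,\dots,U_k$ such that $p$ admits a continuous section over $q^{-1}(U_i)$ for each $i$. *)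

From HB Require Import structures.
From mathcomp Require Import all_boot all_order all_algebra generic_quotient.
From mathcomp Require Import all_classical all_reals all_analysis.
From mathcomp Require Import Rstruct Rstruct_topology.

Set Implicit Arguments.
Unset Strict Implicit.
Unset Printing Implicit Defensive.

Import Order.TTheory GRing.Theory Num.Theory.
Local Open Scope classical_set_scope.
Local Open Scope ring_scope.
Local Open Scope quotient_scope.

Notation Real := Rdefinitions.R.

Definition Iset : set Real := `[0, 1]%classic.
Definition Iunit : Type := set_type Iset.

Definition PathSp (Y : topologicalType) : Type :=
  set_type [set f : {compact-open, Iunit -> Y} | continuous (f : Iunit -> Y)].

Definition path_of (Y : topologicalType) (g : PathSp Y) : Iunit -> Y :=
  (set_val g : {compact-open, Iunit -> Y}).

Definition ev_section_over (Y : topologicalType) (U : set (Y * Y)) : Prop :=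
  exists s : Y * Y -> PathSp Y,
    {within U, continuous s} /\
    forall u, U u -> forall t : Iunit,
      (set_val t = 0 -> path_of (s u) t = u.1) /\
      (set_val t = 1 -> path_of (s u) t = u.2).

Definition TC_le (Y : topologicalType) (n : nat) : Prop :=
  exists U : 'I_n.+1 -> set (Y * Y),
    (forall i, open (U i)) /\
    (forall z, exists i, U i z) /\
    (forall i, ev_section_over (U i)).

Definition path_connected (T : topologicalType) : Prop :=
  [set: T] !=set0 /\
  forall a b : T, exists g : Iunit -> T, continuous g /\
    forall t : Iunit, (set_val t = 0 -> g t = a) /\ (set_val t = 1 -> g t = b).

Definition trivial_pi1 (T : topologicalType) : Prop :=
  forall g : Iunit -> T, continuous g ->
    (forall t0 t1 : Iunit, set_val t0 = 0 -> set_val t1 = 1 -> g t0 = g t1) ->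
    exists H : Iunit * Iunit -> T, continuous H /\
      forall (s t t0 : Iunit), set_val t0 = 0 ->
        (set_val t = 0 -> H (s, t) = g s) /\
        (set_val t = 1 -> H (s, t) = g t0) /\
        ((set_val s = 0 \/ set_val s = 1) -> H (s, t) = g t0).

Definition simply_connected (T : topologicalType) : Prop :=
  path_connected T /\ trivial_pi1 T.

Definition covering_map (Xt X : topologicalType) (P : Xt -> X) : Prop :=
  continuous P /\ (forall x, exists y, P y = x) /\
  forall x : X, exists U : set X, open U /\ U x /\
    exists (K : Type) (V : K -> set Xt),
      (forall k, open (V k)) /\
      (forall k l, k <> l -> V k `&` V l = set0) /\
      P @^-1` U = \bigcup_k V k /\
      forall k, {in V k &, injective P} /\ P @` V k = U /\
        (forall W, open W -> W `<=` V k -> open (P @` W)).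

Definition universal_cover (Xt X : topologicalType) (P : Xt -> X) : Prop :=
  covering_map P /\ simply_connected Xt.

Definition deck (Xt X : topologicalType) (P : Xt -> X) (g : Xt -> Xt) : Prop :=
  exists h : Xt -> Xt, cancel g h /\ cancel h g /\
    continuous g /\ continuous h /\ (forall x, P (g x) = P x).

Definition orb_rel (Xt X : topologicalType) (P : Xt -> X) : rel (Xt * Xt) :=
  fun a b => `[< exists g, deck P g /\ g a.1 = b.1 /\ g a.2 = b.2 >].

Lemma orb_refl (Xt X : topologicalType) (P : Xt -> X) : reflexive (orb_rel P).
Proof.
move=> a; apply/asboolP; exists id; split; last by [].
exists id; split; first by [].
split; first by [].
split; first by move=> ?; exact: cvg_id.
by split; first by move=> ?; exact: cvg_id.
Qed.

Lemma orb_sym (Xt X : topologicalType) (P : Xt -> X) : symmetric (orb_rel P).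
Proof.
have H : forall a b, orb_rel P a b -> orb_rel P b a.
  move=> a b /asboolP [g [[h [gh [hg [cg [ch Pg]]]]] [e1 e2]]].
  apply/asboolP; exists h; split.
    exists g; do 4 split => //.
    by move=> x; rewrite -[in RHS](hg x) Pg.
  by rewrite -e1 -e2 !gh.
by move=> a b; apply/idP/idP => /H.
Qed.

Lemma orb_trans (Xt X : topologicalType) (P : Xt -> X) : transitive (orb_rel P).
Proof.
move=> b a c /asboolP [g [[h [gh [hg [cg [ch Pg]]]]] [e1 e2]]].
move=> /asboolP [g' [[h' [gh' [hg' [cg' [ch' Pg']]]]] [e1' e2']]].
apply/asboolP; exists (g' \o g); split.
  exists (h \o h'); split; first by move=> x /=; rewrite gh' gh.
  split; first by move=> x /=; rewrite hg hg'.
  split; first by move=> x; apply: continuous_comp; [exact: cg | exact: cg'].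
  split; first by move=> x; apply: continuous_comp; [exact: ch' | exact: ch].
  by move=> x /=; rewrite Pg' Pg.
by rewrite /= e1 e2 e1' e2'.
Qed.

Definition orb_equiv (Xt X : topologicalType) (P : Xt -> X) : equiv_rel (Xt * Xt) :=
  EquivRel (orb_rel P) (@orb_refl Xt X P) (@orb_sym Xt X P) (@orb_trans Xt X P).

Definition orbSp (Xt X : topologicalType) (P : Xt -> X) : topologicalType :=
  quotient_topology {eq_quot (orb_equiv P)}.

Definition qmap (Xt X : topologicalType) (P : Xt -> X) (z : orbSp P) : X * X :=
  (P (repr z).1, P (repr z).2).

(* p(gamma) = z, where p(gamma) = [gt(0), gt(1)] for a lift gt of gamma *)
Definition p_maps_to (Xt X : topologicalType) (P : Xt -> X)
    (gam : PathSp X) (z : orbSp P) : Prop :=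
  exists gt : Iunit -> Xt, continuous gt /\
    (forall t, P (gt t) = path_of gam t) /\
    forall t0 t1 : Iunit, set_val t0 = 0 -> set_val t1 = 1 ->
      (\pi_(orbSp P) (gt t0, gt t1) : orbSp P) = z.

Definition TCt_le (Xt X : topologicalType) (P : Xt -> X) (k : nat) : Prop :=
  exists U : 'I_k.+1 -> set (X * X),
    (forall i, open (U i)) /\
    (forall z, exists i, U i z) /\
    (forall i, exists s : orbSp P -> PathSp X,
        {within @qmap _ _ P @^-1` U i, continuous s} /\
        forall z : orbSp P, U i (qmap z) -> p_maps_to (s z) z).

Definition sqnorm (n : nat) (v : 'rV[Real]_n) : Real := \sum_(i < n) v ord0 i ^+ 2.
Definition disk (n : nat) : set 'rV[Real]_n := [set v | sqnorm v <= 1].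
Definition odisk (n : nat) : set 'rV[Real]_n := [set v | sqnorm v < 1].
Definition sphere (n : nat) : set 'rV[Real]_n := [set v | sqnorm v = 1].
Arguments disk n : clear implicits.
Arguments odisk n : clear implicits.
Arguments sphere n : clear implicits.

Definition ocell (X : topologicalType) (J : Type) (d : J -> nat)
  (Phi : forall j, 'rV[Real]_(d j) -> X) (j : J) : set X := Phi j @` odisk (d j).

(* A CW structure on X with cells indexed by J, cell j of dimension d j and
   characteristic map Phi j : D^{d j} -> X (Hatcher, Prop. A.2). *)
Definition CW_structure (X : topologicalType) (J : Type) (d : J -> nat)
    (Phi : forall j, 'rV[Real]_(d j) -> X) : Prop :=
  hausdorff_space X /\
  (forall j, {within disk (d j), continuous (Phi j)}) /\
  (* they restrict to homeomorphisms int D^n -> e_j *)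
  (forall j, {in odisk (d j) &, injective (Phi j)}) /\
  (forall j (W : set 'rV[Real]_(d j)), open W -> W `<=` odisk (d j) ->
     exists O : set X, open O /\ Phi j @` W = O `&` ocell Phi j) /\
  (forall x, exists j, ocell Phi j x) /\
  (forall i j, ocell Phi i `&` ocell Phi j !=set0 -> i = j) /\
  (forall j, exists F : set J, finite_set F /\ (forall i, F i -> (d i < d j)%N) /\
     Phi j @` sphere (d j) `<=` \bigcup_(i in F) ocell Phi i) /\
  (forall A : set X, closed A <-> forall j, closed (disk (d j) `&` Phi j @^-1` A)).

Definition CW_locally_finite (X : topologicalType) (J : Type) (d : J -> nat)
    (Phi : forall j, 'rV[Real]_(d j) -> X) : Prop :=
  forall x : X, exists N : set X, nbhs x N /\
    finite_set [set j | ocell Phi j `&` N !=set0].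

From HB Require Import structures.
From mathcomp Require Import all_boot all_order all_algebra generic_quotient.
From mathcomp Require Import all_classical all_reals all_analysis.
From mathcomp Require Import Rstruct Rstruct_topology.
From mathcomp Require Import lra.

(* Let [U_i] cover [X * X], with continuous sections [s_i] of [p] over [q^-1 U_i].
   Over [V_i = (P * P)^-1 U_i] lift the path [s_i [x, y]] to [Xt] starting at [x]:
   homotopy lifting for the covering [P] makes this lift continuous in [(x, y)], i.e.
   a section of [Xt^I -> Xt * Xt] over [V_i].  It ends at [y]: by definition of [p],
   some lift of [s_i [x, y]] runs from [g x] to [g y] for a deck transformation [g],
   and lifts with the same starting point coincide. *)

Set Implicit Arguments.
Unset Strict Implicit.
Unset Printing Implicit Defensive.

Import Order.TTheory GRing.Theory Num.Theory.
Local Open Scope classical_set_scope.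
Local Open Scope ring_scope.
Local Open Scope quotient_scope.

Local Notation R := Rdefinitions.R.

Lemma in_Iset (r : R) : Iset r <-> 0 <= r <= 1.
Proof. by rewrite /Iset /= in_itv. Qed.

Lemma Iunit_ge0 (t : Iunit) : 0 <= set_val t.
Proof. by case/andP: (proj1 (in_Iset _) (set_valP t)). Qed.

Lemma Iunit_le1 (t : Iunit) : set_val t <= 1.
Proof. by case/andP: (proj1 (in_Iset _) (set_valP t)). Qed.

Lemma Iset0 : Iset 0.
Proof. by apply/in_Iset; rewrite lexx ler01. Qed.

Definition zeroI : Iunit := @SigSub _ _ Iset 0 (mem_set Iset0).

Lemma val_zeroI : set_val zeroI = 0.
Proof. by rewrite set_valE. Qed.

(* [Iunit_of r] is junk ([zeroI]) outside [0, 1]. *)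
Definition Iunit_of (r : R) : Iunit :=
  if pselect (Iset r) is left h then @SigSub _ _ Iset r (mem_set h) else zeroI.

Lemma Iunit_ofK (r : R) : 0 <= r <= 1 -> set_val (Iunit_of r) = r.
Proof. by rewrite -in_Iset /Iunit_of; case: pselect => // h _; rewrite set_valE. Qed.

Lemma Iunit_of_val (t : Iunit) : Iunit_of (set_val t) = t.
Proof.
rewrite /Iunit_of; case: pselect => [h|]; last by case; exact: set_valP.
by apply: eq_sig_hprop.
Qed.

Lemma Iunit_ofT : Iunit_of @` Iset = setT.
Proof.
apply/seteqP; split => // t _; exists (set_val t); [exact: set_valP | exact: Iunit_of_val].
Qed.

Lemma continuous_Iunit_of : {within Iset, continuous Iunit_of}.
Proof.
apply/subspace_sigL_continuousP.
have -> : sigL Iset Iunit_of = id.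
  by apply: funext => t /=; rewrite Iunit_of_val.
by move=> x; exact: cvg_id.
Qed.

Lemma connected_Iunit : connected [set: Iunit].
Proof.
rewrite -Iunit_ofT; apply: connected_continuous_connected; last exact: continuous_Iunit_of.
by apply/connected_intervalP; exact: interval_is_interval.
Qed.

Lemma locally_compact_Iunit : locally_compact [set: Iunit].
Proof.
have cptI : compact [set: Iunit].
  rewrite -Iunit_ofT; apply: continuous_compact; first exact: continuous_Iunit_of.
  exact: segment_compact.
move=> x _; exists setT; first by rewrite withinET; exact: filterT.
by split; [exact: cptI | exact: closedT].
Qed.

Lemma open_Iunit_lt (c : R) : open [set s : Iunit | set_val s < c].
Proof.
apply: (@open_comp _ _ set_val [set x | x < c]); last exact: open_lt.
by move=> x _; exact: initial_continuous.
Qed.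

Lemma open_Iunit_gt (c : R) : open [set s : Iunit | c < set_val s].
Proof.
apply: (@open_comp _ _ set_val [set x | c < x]); last exact: open_gt.
by move=> x _; exact: initial_continuous.
Qed.

Lemma nbhs_Iunit_ball (t : Iunit) (B : set Iunit) : nbhs t B ->
  exists2 e : R, 0 < e & forall s : Iunit, `|set_val t - set_val s| < e -> B s.
Proof. by move/nbhs_ballP => [e e0 he]; exists e => // s hs; apply: he. Qed.

Section continuity_at.
Context {T U : topologicalType}.

Lemma continuous_near_eq (f g : T -> U) (x : T) :
  (\near x, f x = g x) -> {for x, continuous g} -> {for x, continuous f}.
Proof.
move=> efg cg; have fxgx : f x = g x := nbhs_singleton efg.
rewrite /prop_for /continuous_at fxgx; apply: cvg_trans cg.
by apply: near_eq_cvg; apply: filterS efg.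
Qed.

Lemma continuous_pair_at {V : topologicalType} (f : T -> U) (g : T -> V) (x : T) :
  {for x, continuous f} -> {for x, continuous g} ->
  {for x, continuous (fun y => (f y, g y))}.
Proof. exact: cvg_pair. Qed.

Lemma continuous_fst_at (p : T * U) : {for p, continuous (@fst T U)}.
Proof. exact: cvg_fst. Qed.

Lemma continuous_pair_slice {V : topologicalType} (f : T * U -> V) (x : T) (u : U) :
  {for (x, u), continuous f} -> {for u, continuous (fun v => f (x, v))}.
Proof. by apply: continuous_comp; apply: cvg_pair => //; exact: cvg_cst. Qed.

Lemma continuous_set_type_at (S : set U) (f : T -> set_type S) (x : T) :
  {for x, continuous (set_val \o f)} -> {for x, continuous f}.
Proof.
move=> cf B [?/= [[W oW <-]]] /= Wfx /filterS; apply; apply: cf.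
exact: open_nbhs_nbhs.
Qed.

(* Pointwise form of the library's [continuous_curry], by the same tube lemma. *)
Lemma continuous_curry_at {V : topologicalType} (f : T * V -> U) (x : T) :
  (forall v, {for (x, v), continuous f}) ->
  {for x, continuous (curry f : T -> {compact-open, V -> U})}.
Proof.
move=> ctsf; apply/compact_open_cvgP => K O /= cptK oO fKO.
near=> z => w /= [+ + <-]; near: z.
move/compact_near_coveringP/near_covering_withinP : cptK; apply.
move=> v Kv; have [[P Q] [Px Qv] PQfO] : nbhs (x, v) (f @^-1` O).
  by apply: ctsf; move: oO; rewrite openE; apply; apply: fKO; exists v.
by exists (Q, P) => // -[b a] /= [Qb Pa] Kb; exact: PQfO.
Unshelve. all: by end_near. Qed.

End continuity_at.

Lemma continuous_path_eval (Y : topologicalType) :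
  continuous (fun p : PathSp Y * Iunit => path_of p.1 p.2).
Proof.
have -> : (fun p : PathSp Y * Iunit => path_of p.1 p.2) =
    uncurry (fun g : PathSp Y => (path_of g : {compact-open, Iunit -> Y})).
  by apply: funext => -[].
apply: continuous_uncurry_regular.
- exact: locally_compact_Iunit.
- exact: uniform_regular.
- exact: initial_continuous.
- by move=> g; exact: (set_valP g).
Qed.

(* The path [f] when [f] is continuous, junk (a constant path) otherwise. *)
Definition path_of_fun (Y : topologicalType) (f : Iunit -> Y) : PathSp Y :=
  let paths := [set g : {compact-open, Iunit -> Y} | continuous (g : Iunit -> Y)] in
  if pselect (continuous f) is left cf then
    @SigSub _ _ paths (f : {compact-open, Iunit -> Y}) (mem_set cf)
  else @SigSub _ _ paths (cst (f zeroI) : {compact-open, Iunit -> Y})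
         (mem_set (@cst_continuous Iunit Y (f zeroI))).

Lemma path_of_funK (Y : topologicalType) (f : Iunit -> Y) :
  continuous f -> path_of (path_of_fun f) = f.
Proof. by rewrite /path_of_fun; case: pselect => // cf _; rewrite /path_of set_valE. Qed.

Section covering_map.
Context {Xt X : topologicalType} (P : Xt -> X) (covP : covering_map P).

Lemma covering_local_section (x : X) : exists U : set X, open U /\ U x /\
  forall y : Xt, U (P y) -> exists (V : set Xt) (sig : X -> Xt),
    [/\ open V, V y, (forall x', U x' -> P (sig x') = x'),
        (forall y', V y' -> sig (P y') = y') &
        (forall x', U x' -> {for x', continuous sig})].
Proof.
have [_ [_ /(_ x) [U [oU [Ux [K [V [oV [_ [preU sheetV]]]]]]]]]] := covP.
exists U; split => //; split => // y Uy.
have [k _ Vky] : (\bigcup_k V k) y by rewrite -preU.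
have [injV [imV openPV]] := sheetV k.
have /choice[sig sigV] : forall x', exists y', U x' -> V k y' /\ P y' = x'.
  move=> x'; have [Ux'|nUx'] := pselect (U x'); last by exists y.
  by move: Ux'; rewrite -imV => -[y' Vy' <-]; exists y'.
have sigK y' : V k y' -> sig (P y') = y'.
  move=> Vy'; have [Vsig Psig] := sigV (P y') ltac:(by rewrite -imV; exists y').
  by apply: injV => //; exact: mem_set.
exists (V k), sig; split => // [x' /sigV[]//|x' Ux' B].
rewrite nbhsE => -[W [oW Wsx] WB].
have [Vsx Psx] := sigV x' Ux'.
suff : nbhs x' (P @` (W `&` V k)).
  by apply: filterS => _ [w [Ww Vw] <-]; rewrite /= sigK //; exact: WB.
apply: open_nbhs_nbhs; split; first by apply: openPV => //; exact: openI.
by exists (sig x').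
Qed.

Lemma covering_sheets (x : X) : exists (K : Type) (V : K -> set Xt),
  [/\ (forall k, open (V k)), (forall k l, k <> l -> V k `&` V l = set0),
      P @^-1` [set x] `<=` \bigcup_k V k & forall k, {in V k &, injective P}].
Proof.
have [_ [_ /(_ x) [U [_ [Ux [K [V [oV [disj [preU sheetV]]]]]]]]]] := covP.
exists K, V; split => // [y /= Pyx|k]; first by rewrite -preU /= Pyx.
by case: (sheetV k).
Qed.

(* Two lifts of the same map agree on a clopen set, since locally both lie in
   sheets, which either coincide or are disjoint. *)
Lemma lift_unique (T : topologicalType) (g1 g2 : T -> Xt) (t0 : T) :
  connected [set: T] -> continuous g1 -> continuous g2 ->
  (forall t, P (g1 t) = P (g2 t)) -> g1 t0 = g2 t0 -> g1 =1 g2.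
Proof.
move=> connT cg1 cg2 Pg e0.
pose E := [set t | g1 t = g2 t].
have sheet_nbhs t : exists (V1 V2 : set Xt), [/\ nbhs t (g1 @^-1` V1 `&` g2 @^-1` V2),
    (E t -> {in V1 &, injective P} /\ V1 = V2) & (~ E t -> V1 `&` V2 = set0)].
  have [K [V [oV disj preV injV]]] := covering_sheets (P (g1 t)).
  have [k _ Vk] := preV (g1 t) erefl; have [l _ Vl] := preV (g2 t) (esym (Pg t)).
  exists (V k), (V l); split.
  - by apply: filterI; [apply: cg1 | apply: cg2]; exact: open_nbhs_nbhs.
  - move=> Et; split => //; congr V; apply: contrapT => kl.
    have e12 : g1 t = g2 t := Et.
    have : (V k `&` V l) (g1 t) by split => //; rewrite e12.
    by rewrite disj.
  - move=> nEt; apply: disj => kl; apply: nEt; move: kl Vl => <- Vl.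
    by apply: (injV k) => //; exact: mem_set.
have oE : open E.
  rewrite openE => t Et.
  have [V1 [V2 [nV injV _]]] := sheet_nbhs t.
  have [inj12 V12] := injV Et; rewrite -V12 in nV.
  by apply: filterS nV => s [V1s V2s]; apply: inj12; rewrite ?inE.
have cE : closed E.
  rewrite -[E]setCK closedC openE => t nEt.
  have [V1 [V2 [nV _ disjV]]] := sheet_nbhs t.
  apply: filterS nV => s [V1s V2s] Es.
  have : (V1 `&` V2) (g1 s) by split => //; rewrite Es.
  by rewrite disjV.
have ET : E = setT.
  by apply: connT; [exists t0 | exists E; rewrite ?setTI | exists E; rewrite ?setTI].
by move=> t; have : E t by rewrite ET.
Qed.

End covering_map.

Lemma nbhs_pair_Iunit {Z : topologicalType} (z0 : Z) (t0 : Iunit) (W : set (Z * Iunit)) :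
  nbhs (z0, t0) W -> exists (N : set Z) (e : R),
    [/\ open N, N z0, 0 < e & forall z s, N z -> `|set_val t0 - set_val s| < e -> W (z, s)].
Proof.
case=> -[B1 B2] /= [+ /nbhs_Iunit_ball[e e0 B2e]] sub.
rewrite nbhsE => -[N [oN Nz0] NB1]; exists N, e; split => // z s Nz ts.
by apply: (sub (z, s)); split; [exact: NB1 | exact: B2e].
Qed.

Section path_lifting.
Context {Xt X Z : topologicalType} (P : Xt -> X) (covP : covering_map P).
Variables (A : set Z) (F : Z * Iunit -> X) (a : Z -> Xt).
Hypothesis oA : open A.
Hypothesis cF : forall z, A z -> forall t, {for (z, t), continuous F}.
Hypothesis ca : continuous a.
Hypothesis Fa : forall z, A z -> forall t, set_val t = 0 -> F (z, t) = P (a z).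

Definition lifts_on (N : set Z) (r : R) (L : Z * Iunit -> Xt) : Prop :=
  forall z t, N z -> set_val t < r ->
    [/\ {for (z, t), continuous L}, P (L (z, t)) = F (z, t) &
        (set_val t = 0 -> L (z, t) = a z)].

Definition liftable_upto (z0 : Z) (r : R) : Prop :=
  exists (N : set Z) (L : Z * Iunit -> Xt), [/\ open N, N z0, N `<=` A & lifts_on N r L].

Lemma liftable_start (z0 : Z) : A z0 -> exists2 e : R, 0 < e & liftable_upto z0 e.
Proof.
move=> Az0; have [U [oU [UF0 sectU]]] := covering_local_section covP (F (z0, zeroI)).
have [V [sig [oV Va sigP sigK sigC]]] := sectU (a z0) ltac:(by rewrite -(Fa Az0 val_zeroI)).
have [N1 [e [oN1 N1z0 e0 FU]]] :=
  nbhs_pair_Iunit (cF Az0 (open_nbhs_nbhs (conj oU UF0))).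
exists e => //; exists (N1 `&` a @^-1` V `&` A), (sig \o F); split.
- by apply: openI => //; apply: openI => //; exact: (proj1 (continuousP a) ca).
- by [].
- by move=> z [].
- move=> z t [[N1z Vaz] Az] te.
  have Ut : U (F (z, t)).
    by apply: FU => //; rewrite val_zeroI sub0r normrN ger0_norm // Iunit_ge0.
  split; [by apply: continuous_comp; [exact: cF | exact: sigC] | exact: sigP |].
  by move=> t0; rewrite /= (Fa Az t0) sigK.
Qed.

(* After time [c] the lift is continued by the local section [sig]; on the overlap it
   agrees with [L] because [sig] inverts [P] on [V]. *)
Lemma lifts_on_glue (N M : set Z) (L : Z * Iunit -> Xt) (U : set X) (V : set Xt)
    (sig : X -> Xt) (r' c e r : R) :
  lifts_on N r' L -> N `<=` A -> open M -> M `<=` N -> 0 < c -> 0 < e -> c + e <= r' ->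
  (forall x, U x -> P (sig x) = x) -> (forall y, V y -> sig (P y) = y) ->
  (forall x, U x -> {for x, continuous sig}) ->
  (forall z s, M z -> `|c - set_val s| < e -> V (L (z, s))) ->
  (forall z s, M z -> c - e < set_val s -> set_val s < r -> U (F (z, s))) ->
  lifts_on M r (fun p => if set_val p.2 < c then L p else sig (F p)).
Proof.
move=> LN NA oM MN c0 e0 cer' sigP sigK sigC LV FU z t Mz tr.
set L' := fun p => _.
have agree z' s : M z' -> c - e < set_val s -> set_val s < c -> L (z', s) = sig (F (z', s)).
  move=> Mz' es sc; have [_ PL _] := LN z' s (MN _ Mz') ltac:(lra).
  by rewrite -PL sigK //; apply: LV => //; rewrite ltr_norml; apply/andP; split; lra.
have [tc|ct] := boolP (set_val t < c).
  have [cL PL La] := LN z t (MN _ Mz) ltac:(lra).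
  split; rewrite /L' /= ?tc //.
  apply: (continuous_near_eq (g := L)) cL.
  exists (setT, [set s : Iunit | set_val s < c]) => [|[z' s] /= [_ sc]]; last by rewrite sc.
  by split; [exact: filterT | apply: open_nbhs_nbhs; split => //; exact: open_Iunit_lt].
rewrite -leNgt in ct; have Ut : U (F (z, t)) by apply: FU => //; lra.
have nct : (set_val t < c) = false by apply/negbTE; rewrite -leNgt.
split; rewrite /L' /= ?nct //.
- apply: (continuous_near_eq (g := sig \o F)).
    exists (M, [set s : Iunit | c - e < set_val s]) => [|[z' s] /= [Mz' es]].
      split; first exact: open_nbhs_nbhs.
      by apply: open_nbhs_nbhs; split; [exact: open_Iunit_gt | rewrite /=; lra].
    by case: ifP => // sc; apply: agree.
  by apply: continuous_comp; [apply: cF; exact: NA (MN _ Mz) | exact: sigC].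
- exact: sigP.
- by move=> t0; exfalso; lra.
Qed.

Lemma liftable_extend (z0 : Z) (m : Iunit) : A z0 -> 0 < set_val m ->
  exists2 d : R, 0 < d & forall r', set_val m - d < r' ->
    liftable_upto z0 r' -> liftable_upto z0 (set_val m + d).
Proof.
move=> Az0 m0; have [U [oU [UFm sectU]]] := covering_local_section covP (F (z0, m)).
have [N1 [del [oN1 N1z0 del0 FU]]] := nbhs_pair_Iunit (cF Az0 (open_nbhs_nbhs (conj oU UFm))).
have [d [d0 d_del d_m]] : exists d : R, [/\ 0 < d, d <= del / 2 & d <= set_val m / 2].
  exists (Num.min (del / 2) (set_val m / 2)).
  by rewrite lt_min !divr_gt0 // !ge_min !lexx orbT.
exists d => // r' r'd [N [L [oN Nz0 NA LN]]].
have m1 := Iunit_le1 m.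
pose c := set_val m - d; pose tc := Iunit_of c.
have vtc : set_val tc = c by apply: Iunit_ofK; apply/andP; split; rewrite /c; lra.
have [cL PL _] := LN z0 tc Nz0 ltac:(by rewrite vtc).
have UPL : U (P (L (z0, tc))).
  by rewrite PL; apply: FU => //; rewrite vtc /c opprB addrC subrK ger0_norm; lra.
have [V [sig [oV VL sigP sigK sigC]]] := sectU _ UPL.
have [N2 [e [oN2 N2z0 e0 LV]]] := nbhs_pair_Iunit (cL _ (open_nbhs_nbhs (conj oV VL))).
have [e' [e'0 e'_e e'_r e'_d]] :
    exists e' : R, [/\ 0 < e', e' <= e, e' <= r' - c & e' <= d].
  exists (Num.min e (Num.min (r' - c) d)).
  by rewrite !lt_min !ge_min !lexx !orbT e0 d0 subr_gt0 r'd.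
exists (N `&` N1 `&` N2), (fun p => if set_val p.2 < c then L p else sig (F p)).
split; [by apply: openI => //; apply: openI | by [] | by move=> z [[/NA]] |].
apply: (lifts_on_glue LN NA _ _ _ e'0 _ sigP sigK sigC).
- by apply: openI => //; apply: openI.
- by move=> z [[]].
- by rewrite /c; lra.
- lra.
- move=> z s [_ N2z] cs; apply: LV => //; rewrite vtc.
  exact: lt_le_trans cs e'_e.
- move=> z s [[_ N1z] _] es sm; apply: FU => //.
  by rewrite ltr_norml; apply/andP; split; rewrite /c in es; lra.
Qed.

(* Otherwise extending at the supremum of the liftable times would exceed it. *)
Lemma liftable_beyond1 (z0 : Z) : A z0 -> exists2 r : R, 1 < r & liftable_upto z0 r.
Proof.
move=> Az0; apply: contrapT => nQ.
have Qle1 r : liftable_upto z0 r -> r <= 1.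
  by move=> Qr; rewrite leNgt; apply/negP => r1; apply: nQ; exists r.
have [e e0 Qe] := liftable_start Az0.
have supQ : has_sup (liftable_upto z0) by split; [exists e | exists 1 => r /Qle1].
set s := sup (liftable_upto z0).
have es : e <= s := sup_upper_bound supQ Qe.
have s1 : s <= 1 by apply: ge_sup; [exists e | move=> r /Qle1].
have vs : set_val (Iunit_of s) = s by apply: Iunit_ofK; apply/andP; split; lra.
have [d d0 extend] := @liftable_extend z0 (Iunit_of s) Az0 ltac:(by rewrite vs; lra).
have [r Qr sr] := sup_adherent d0 supQ.
have := sup_upper_bound supQ (extend r ltac:(by rewrite vs) Qr).
by rewrite vs -/s; lra.
Qed.

Lemma homotopy_lift : exists L : Z * Iunit -> Xt, forall z t, A z ->
  [/\ {for (z, t), continuous L}, P (L (z, t)) = F (z, t) &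
      (set_val t = 0 -> L (z, t) = a z)].
Proof.
have lift_slice z r N L : 1 < r -> N z -> lifts_on N r L ->
    [/\ continuous (fun s => L (z, s)), forall t, P (L (z, t)) = F (z, t) &
        forall t, set_val t = 0 -> L (z, t) = a z].
  move=> r1 Nz LN; have tr t : set_val t < r := le_lt_trans (Iunit_le1 t) r1.
  split=> [t|t|t]; last by case: (LN z t Nz (tr t)).
    by case: (LN z t Nz (tr t)) => /continuous_pair_slice.
  by case: (LN z t Nz (tr t)).
have /choice[lam lamP] : forall z, exists l : Iunit -> Xt, A z ->
    [/\ continuous l, forall t, P (l t) = F (z, t) & forall t, set_val t = 0 -> l t = a z].
  move=> z; have [Az|nAz] := pselect (A z); last by exists (fun=> a z).
  have [r r1 [N [L [_ Nz _ LN]]]] := liftable_beyond1 Az.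
  by exists (fun s => L (z, s)) => _; exact: lift_slice LN.
exists (fun p => lam p.1 p.2) => z0 t Az0.
have [_ PL La] := lamP z0 Az0; split; [|exact: PL|exact: La].
have [r r1 [N [L [oN Nz0 NA LN]]]] := liftable_beyond1 Az0.
apply: (continuous_near_eq (g := L)).
  exists (N, setT) => [|[z s] /= [Nz _]].
    by split; [exact: open_nbhs_nbhs | exact: filterT].
  have [cl Pl la] := lamP z (NA _ Nz); have [cL PL' La'] := lift_slice z r N L r1 Nz LN.
  apply: (lift_unique covP (t0 := zeroI) connected_Iunit cl cL) => [u|].
    by rewrite Pl PL'.
  by rewrite la ?La' ?val_zeroI.
by case: (LN z0 t Nz0 (le_lt_trans (Iunit_le1 t) r1)).
Qed.

End path_lifting.

Section orbit_space.
Context {Xt X : topologicalType} (P : Xt -> X).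

Lemma continuous_prod_map : continuous P ->
  continuous (fun z : Xt * Xt => (P z.1, P z.2)).
Proof.
move=> cP z; apply: cvg_pair; apply: continuous_comp;
  [exact: cvg_fst | exact: cP | exact: cvg_snd | exact: cP].
Qed.

Lemma pi_orbSp_eq (x y : Xt * Xt) :
  (\pi_(orbSp P) x : orbSp P) = \pi_(orbSp P) y ->
  exists g, deck P g /\ g x.1 = y.1 /\ g x.2 = y.2.
Proof. by move=> /eqmodP; rewrite /= => /asboolP. Qed.

Lemma qmap_pi (z : Xt * Xt) : qmap (\pi_(orbSp P) z : orbSp P) = (P z.1, P z.2).
Proof.
have [g [[_ [_ [_ [_ [_ Pg]]]]] [<- <-]]] := pi_orbSp_eq (reprK (\pi_(orbSp P) z : orbSp P)).
by rewrite /qmap !Pg.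
Qed.

Lemma continuous_qmap : continuous P -> continuous (@qmap _ _ P).
Proof.
move=> cP; apply/quotient_continuous.
have -> : @qmap _ _ P \o \pi_(orbSp P) = fun z => (P z.1, P z.2).
  by apply: funext => z; exact: qmap_pi.
exact: continuous_prod_map.
Qed.

(* [p gam = [z]] means that [gam] lifts to a path from [z.1] to [z.2]: translate any
   lift by the deck transformation relating its endpoints to [z]. *)
Lemma p_maps_to_pi (gam : PathSp X) (z : Xt * Xt) :
  p_maps_to gam (\pi_(orbSp P) z) -> exists gt : Iunit -> Xt,
    [/\ continuous gt, forall t, P (gt t) = path_of gam t,
        forall t, set_val t = 0 -> gt t = z.1 & forall t, set_val t = 1 -> gt t = z.2].
Proof.
move=> [gt [cgt [Pgt endgt]]].
have val_inj' : injective (@set_val _ Iset) := can_inj Iunit_of_val.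
have v1 : set_val (Iunit_of 1) = 1 by apply: Iunit_ofK; rewrite ler01 lexx.
have [g [[_ [_ [_ [cg [_ Pg]]]]] [g0 g1]]] := pi_orbSp_eq (endgt _ _ val_zeroI v1).
exists (g \o gt); split => [|t|t|t].
- by move=> t; apply: continuous_comp; [exact: cgt | exact: cg].
- by rewrite /= Pg.
- by rewrite -val_zeroI => /val_inj' ->.
- by rewrite -v1 => /val_inj' ->.
Qed.

End orbit_space.

Lemma ev_section_over_lift {Xt X : topologicalType} (P : Xt -> X) (U : set (X * X))
    (s : orbSp P -> PathSp X) :
  covering_map P -> open U -> {within @qmap _ _ P @^-1` U, continuous s} ->
  (forall w, U (qmap w) -> p_maps_to (s w) w) ->
  ev_section_over [set z : Xt * Xt | U (P z.1, P z.2)].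
Proof.
move=> covP oU cs sP; have cP : continuous P by case: covP.
set A := [set z : Xt * Xt | _].
have oA : open A by apply: (proj1 (continuousP _) (continuous_prod_map cP)).
have UA z : A z -> U (qmap (\pi_(orbSp P) z : orbSp P)) by rewrite qmap_pi.
pose F (p : (Xt * Xt) * Iunit) := path_of (s (\pi_(orbSp P) p.1)) p.2.
have cF p : A p.1 -> {for p, continuous F}.
  move=> Ap; apply: (@continuous_comp _ _ _
    (fun p => (s (\pi_(orbSp P) p.1), p.2)) (fun q => path_of q.1 q.2));
    last exact: continuous_path_eval.
  have cspi : {for p.1, continuous (s \o \pi_(orbSp P))}.
    apply: continuous_comp; first exact: pi_continuous.
    move: cs; rewrite continuous_open_subspace; first by apply; rewrite inE; exact: UA.
    exact: (proj1 (continuousP _) (continuous_qmap cP)).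
  apply: continuous_pair_at; last exact: cvg_snd.
  exact: (continuous_comp (@continuous_fst_at _ _ p) cspi).
have {}cF z : A z -> forall t, {for (z, t), continuous F} by move=> Az t; exact: cF.
have lift_ends z : A z -> exists gt : Iunit -> Xt,
    [/\ continuous gt, forall t, P (gt t) = F (z, t),
        forall t, set_val t = 0 -> gt t = z.1 & forall t, set_val t = 1 -> gt t = z.2].
  by move=> /UA/sP/p_maps_to_pi.
have Fa z : A z -> forall t, set_val t = 0 -> F (z, t) = P z.1.
  by move=> /lift_ends[gt [_ Pgt gt0 _]] t t0; rewrite -Pgt gt0.
have [L liftL] := homotopy_lift covP oA cF (fun p => @continuous_fst_at _ _ p) Fa.
have cLz z : A z -> continuous (fun t => L (z, t)).
  by move=> Az t; case: (liftL z t Az) => /continuous_pair_slice.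
exists (fun z => path_of_fun (fun t => L (z, t))); split.
  rewrite continuous_open_subspace // => z /set_mem Az.
  apply: continuous_set_type_at.
  apply: (continuous_near_eq (g := curry L : _ -> {compact-open, Iunit -> Xt})).
    apply: filterS (open_nbhs_nbhs (conj oA Az)) => z' Az'.
    exact: path_of_funK (cLz z' Az').
  apply: (continuous_curry_at (x := z)) => v.
  by have [cL _ _] := liftL z v Az.
move=> z Az t; rewrite path_of_funK; last exact: cLz.
have [_ _ L0] := liftL z t Az; split=> // t1.
have [gt [cgt Pgt gt0 gt1]] := lift_ends z Az.
rewrite -(lift_unique covP (t0 := zeroI) connected_Iunit cgt (cLz z Az)) => [|u|].
- exact: gt1.
- by have [_ -> _] := liftL z u Az.
- by have [_ _ ->] := liftL z zeroI Az; rewrite ?gt0 ?val_zeroI.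
Qed.

Theorem mainTheorem13 (X Xt : topologicalType) (J : Type) (d : J -> nat)
    (Phi : forall j, 'rV[Rdefinitions.R]_(d j) -> X) (P : Xt -> X) :
  @CW_structure X J d Phi -> @CW_locally_finite X J d Phi ->
  connected [set: X] -> universal_cover P ->
  forall k : nat, TCt_le P k -> TC_le Xt k.
Proof.
move=> _ _ _ [covP _] k [U [oU [coverU sectU]]].
have cPP := continuous_prod_map (proj1 covP).
exists (fun i => [set z : Xt * Xt | U i (P z.1, P z.2)]); split; [|split].
- by move=> i; exact: (proj1 (continuousP _) cPP).
- by move=> z; have [i Ui] := coverU (P z.1, P z.2); exists i.
- move=> i; have [s [cs sP]] := sectU i.
  exact: ev_section_over_lift covP (oU i) cs sP.
Qed.
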